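(* Let $\textup{Sav}_{312}(z)=\sum_{n\ge0}\textup{Sav}_n(312)z^n$ (with $\textup{Sav}_0(312)=1$). Then \[\textup{Sav}_{312}(z)=\frac{-z^3+z^2+z-1}{z^4-2z^3+z^2+2z-1}.\] In particular, $\textup{Sav}_{312}(z)=1/(1-B(z))$ where $B(z)=z+\sum_{n\ge2}\lfloor n/2\rfloor z^n=\frac{z^4-z^3+z}{(z-1)^2(z+1)}$ is the generating function of strongly 312-avoiding permutations ending in the entry $1$.
   Context: Permutations are written in one-line notation $p=p_1\cdots p_n$ with $p_i=p(i)$. $p$ contains a pattern $q=q_1\cdots q_m$ if there are indices $i_1<\cdots<i_m$ with $p_{i_r}<p_{i_s}$ iff $q_r<q_s$; otherwise $p$ avoids $q$. $p^2(i)=p(p(i))$. A permutation $p$ is strongly $q$-avoiding if both $p$ and $p^2$ avoid $q$, and $\textup{Sav}_n(q)$ is the number of strongly $q$-avoiding permutations of length $n$. *)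

From HB Require Import structures.
From mathcomp Require Import all_boot all_order all_algebra all_fingroup.
Set Implicit Arguments. Unset Strict Implicit. Unset Printing Implicit Defensive.
Import Order.TTheory GRing.Theory Num.Theory.

Definition contains (n : nat) (w : 'I_n -> nat) (q : seq nat) : bool :=
  [exists f : {ffun 'I_(size q) -> 'I_n},
    [forall r : 'I_(size q), forall s : 'I_(size q),
       ((r < s)%N ==> (f r < f s)%N) &&
       ((w (f r) < w (f s))%N == (nth 0%N q r < nth 0%N q s)%N)]].

Definition avoids (n : nat) (w : 'I_n -> nat) (q : seq nat) : bool :=
  ~~ contains w q.

(* One-line notation of p : values p(i); we use 0-based values, which
   does not affect relative order. p^2 = p * p, so (p*p) i = p (p i). *)
Definition oneline (n : nat) (p : {perm 'I_n}) : 'I_n -> nat :=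
  fun i => val (p i).

Definition strongly_avoids (n : nat) (p : {perm 'I_n}) (q : seq nat) : bool :=
  avoids (oneline p) q && avoids (oneline (p * p)%g) q.

Definition p312 : seq nat := [:: 3; 1; 2]%N.

(* Sav_n(312); for n = 0 the unique empty permutation is counted, so Sav_0 = 1. *)
Definition Sav312 (n : nat) : nat :=
  #|[set p : {perm 'I_n} | strongly_avoids p p312]|.

(* Number of strongly 312-avoiding permutations of length n+1 ending in
   the entry 1 (0-based: last value is 0). *)
Definition Sav312_end1 (n : nat) : nat :=
  #|[set p : {perm 'I_n.+1} | strongly_avoids p p312 && (p ord_max == ord0)]|.

(* Formal power series over int as coefficient functions nat -> int. *)
Definition conv (a b : nat -> int) (n : nat) : int :=
  (\sum_(i < n.+1) a i * b (n - i)%N)%R.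

Definition poly_coefs (s : seq int) : nat -> int := fun n => nth 0%R s n.

Definition SavGF (n : nat) : int := Posz (Sav312 n).

Definition Bcoef (n : nat) : int :=
  if n == 0%N then 0%R else if n == 1%N then 1%R else Posz n./2.

Definition oneMinusB (n : nat) : int := (Posz (n == 0%N) - Bcoef n)%R.

From mathcomp Require Import all_boot all_order all_algebra all_fingroup.
From mathcomp Require Import zify ring.
Import Order.TTheory GRing.Theory Num.Theory.
Set Implicit Arguments. Unset Strict Implicit. Unset Printing Implicit Defensive.

(* Let p be strongly 312-avoiding with p(i) = 0 (values are 0-based).  Every
   entry left of the 0 is smaller than every entry right of it, so p is the
   direct sum of a strongly 312-avoiding permutation of length i+1 ending in 0
   and an arbitrary strongly 312-avoiding one; as squaring commutes with direct
   sums this gives Sav_{n+1} = sum_i E_i Sav_{n-i}, i.e. Sav(z) (1 - B(z)) = 1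
   once E_i, the number of those ending in 0, is known.  A strongly 312-avoiding
   p of length N ending in 0 is a tent a, a+1, ..., N-1, a-1, ..., 0 with
   N - a <= a: the last entry of p^2 is a = p(0), so 312-avoidance of p^2
   forces p^2 to preserve the positions below a, after which the
   312-avoidance of p and p^2 leaves no freedom.  There are floor(N/2) tents,
   which is the coefficient of B, and the rational expressions follow by
   multiplying truncated power series. *)

Definition has312 n (w : 'I_n -> nat) : bool :=
  [exists i : 'I_n, exists j : 'I_n, exists k : 'I_n,
     [&& (i < j)%N, (j < k)%N, (w j < w k)%N & (w k < w i)%N]].

Lemma contains312E n (w : 'I_n -> nat) : contains w p312 = has312 w.
Proof.
apply/idP/idP.
- case/existsP => f /forallP fP.
  have f_ok r s := forallP (fP r) s.
  have /andP[/= lt_f01 _] := f_ok (inord 0) (inord 1).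
  have /andP[/= lt_f12 /eqP lt_w12] := f_ok (inord 1) (inord 2).
  have /andP[_ /eqP lt_w20] := f_ok (inord 2) (inord 0).
  move: lt_f01 lt_f12 lt_w12 lt_w20; rewrite !inordK //= => lt_f01 lt_f12 lt_w12 lt_w20.
  by apply/existsP; exists (f (inord 0)); apply/existsP; exists (f (inord 1));
    apply/existsP; exists (f (inord 2)); rewrite lt_f01 lt_f12 lt_w12 lt_w20.
- case/existsP => i /existsP [j /existsP [k /and4P [lt_ij lt_jk lt_wjk lt_wki]]].
  apply/existsP; exists [ffun r : 'I_3 => nth i [:: i; j; k] r].
  apply/forallP => r; apply/forallP => s; rewrite !ffunE.
  case: r => [[|[|[|r]]] ?] //; case: s => [[|[|[|s]]] ?] //=;
    rewrite ?ltnn ?implybT ?(ltnW lt_ij) /=; lia.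
Qed.

Lemma has312F n (w : 'I_n -> nat) (i j k : 'I_n) : ~~ has312 w ->
  (i < j)%N -> (j < k)%N -> (w j < w k)%N -> (w k < w i)%N -> False.
Proof.
move=> /negP no312 lt_ij lt_jk lt_wjk lt_wki; apply: no312.
by apply/existsP; exists i; apply/existsP; exists j; apply/existsP; exists k; apply/and4P.
Qed.

Lemma strongly_avoids312E n (p : {perm 'I_n}) :
  strongly_avoids p p312 = ~~ has312 (oneline p) && ~~ has312 (oneline (p * p)%g).
Proof. by rewrite /strongly_avoids /avoids !contains312E. Qed.

Lemma has312_small n (w : 'I_n -> nat) : (n <= 2)%N -> ~~ has312 w.
Proof.
move=> le_n2; apply/existsP => -[x /existsP [y /existsP [z /and4P [lt_xy lt_yz _ _]]]].
by have := ltn_ord z; lia.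
Qed.

Lemma strongly_avoids312_small n (p : {perm 'I_n}) : (n <= 2)%N -> strongly_avoids p p312.
Proof. by move=> le_n2; rewrite strongly_avoids312E !has312_small. Qed.

Lemma card_ltn_ord N c : (c <= N)%N -> #|[pred x : 'I_N | (x < c)%N]| = c.
Proof.
move=> le_cN; have widen_inj : injective (widen_ord le_cN) by move=> y z /(congr1 val) /= /val_inj.
rewrite -[RHS](card_ord c) -(card_imset _ widen_inj).
apply: eq_card => x; rewrite inE; apply/idP/imsetP => [lt_xc|[y _ ->]] //=.
by exists (Ordinal lt_xc) => //; apply: val_inj.
Qed.

Lemma card_perm_ltn N (p : {perm 'I_N}) c : (c <= N)%N ->
  #|[pred x | (p x < c)%N]| = c.
Proof.
move=> le_cN; rewrite -[RHS](card_ltn_ord le_cN) -(card_image (@perm_inj _ p)).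
apply: eq_card => y; rewrite -[y in LHS](permKV p) (mem_image (@perm_inj _ p)).
by rewrite !inE permKV.
Qed.

Lemma card_perm_geq N (p : {perm 'I_N}) c : (c <= N)%N ->
  #|[pred x | (c <= p x)%N]| = (N - c)%N.
Proof.
move=> le_cN; have := cardC [pred x | (p x < c)%N].
rewrite card_perm_ltn // card_ord => cardE; rewrite -[N in (N - c)%N]cardE addKn.
by apply: eq_card => x; rewrite !inE leqNgt.
Qed.

Lemma downclosed_ltnE N (P : pred 'I_N) c :
  #|P| = c -> (forall x y : 'I_N, (y < x)%N -> P x -> P y) ->
  forall x, P x = (x < c)%N.
Proof.
move=> cardP downP x; apply/idP/idP => [Px | lt_xc].
- have : [pred y : 'I_N | (y < x.+1)%N] \subset P.
    apply/subsetP => y; rewrite inE ltnS.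
    by case: ltngtP => // [lt_yx _|/val_inj ->]; first exact: downP lt_yx Px.
  by move/subset_leq_card; rewrite card_ltn_ord ?cardP.
- apply: contraLR lt_xc => notPx; rewrite -leqNgt -cardP.
  rewrite -[x in (_ <= x)%N](card_ltn_ord (ltnW (ltn_ord x))).
  apply/subset_leq_card/subsetP => y Py; rewrite inE.
  case: ltngtP => // [lt_xy|/val_inj eq_yx]; case/negP: notPx; last by rewrite -eq_yx.
  exact: downP lt_xy Py.
Qed.

Lemma avoid312_ltn_last n (w : {perm 'I_n.+1}) : ~~ has312 (oneline w) ->
  forall x, (w x < w ord_max)%N = (x < w ord_max)%N.
Proof.
move=> w_av; apply: (downclosed_ltnE (P := [pred x | (w x < w ord_max)%N])).
  exact/card_perm_ltn/ltnW/ltn_ord.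
move=> x y lt_yx; rewrite !inE => lt_wx; rewrite ltnNge; apply/negP => le_wy.
have lt_wy : (w ord_max < w y)%N.
  rewrite ltn_neqAle le_wy andbT; apply/eqP => /ord_inj /perm_inj eq_y.
  by move: (ltn_ord x) lt_yx; rewrite -eq_y /=; lia.
have lt_x_max : (x < @ord_max n)%N.
  rewrite ltn_neqAle -ltnS ltn_ord andbT; apply/eqP => /ord_inj eq_x.
  by rewrite eq_x ltnn in lt_wx.
exact: (has312F w_av lt_yx lt_x_max lt_wx lt_wy).
Qed.

Lemma steps_incr (f : nat -> nat) m d :
  (forall i, (m <= i < m + d)%N -> (f i < f i.+1)%N) -> (f m + d <= f (m + d))%N.
Proof.
elim: d => [|d IHd] step; first by rewrite !addn0.
have := IHd (fun i lt_i => step i ltac:(lia)); have := step (m + d) ltac:(lia).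
by rewrite !addnS; lia.
Qed.

Lemma steps_decr (f : nat -> nat) m d :
  (forall i, (m <= i < m + d)%N -> (f i.+1 < f i)%N) -> (f (m + d) + d <= f m)%N.
Proof.
elim: d => [|d IHd] step; first by rewrite !addn0.
have := IHd (fun i lt_i => step i ltac:(lia)); have := step (m + d) ltac:(lia).
by rewrite !addnS; lia.
Qed.

Definition tent_fun n j (x : 'I_n.+1) : 'I_n.+1 :=
  inord (if (x < j)%N then n.+1 - j + x else n - x)%N.
Arguments tent_fun : clear implicits.

Lemma tent_funE n j (x : 'I_n.+1) :
  tent_fun n j x = (if (x < j)%N then n.+1 - j + x else n - x)%N :> nat.
Proof. by rewrite inordK //; have := ltn_ord x; case: ifP; lia. Qed.

Lemma tent_fun_inj n j : injective (tent_fun n j).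
Proof.
move=> x y /(congr1 val); rewrite /= !tent_funE => eq_xy; apply/val_inj.
by have := ltn_ord x; have := ltn_ord y; move: eq_xy; do 2 case: ifP; rewrite /=; lia.
Qed.

Definition tent n j : {perm 'I_n.+1} := perm (@tent_fun_inj n j).

Lemma tentE n j x : tent n j x = (if (x < j)%N then n.+1 - j + x else n - x)%N :> nat.
Proof. by rewrite permE tent_funE. Qed.

Lemma tent_sqE n j x : (0 < j)%N -> (j + j <= n.+1)%N ->
  (tent n j * tent n j)%g x =
  (if (x < j)%N then j.-1 - x else if (x < n.+1 - j)%N then nat_of_ord x
   else n.+1 - j + n - x)%N :> nat.
Proof.
move=> j_pos le_2j; rewrite permM !tentE; have := ltn_ord x.
by case: (ltnP x j); case: (ltnP x (n.+1 - j)); case: ifP; lia.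
Qed.

Lemma tent_strongly_avoids312 n j : (0 < j)%N -> (j + j <= n.+1)%N ->
  strongly_avoids (tent n j) p312.
Proof.
move=> j_pos le_2j; rewrite strongly_avoids312E; apply/andP; split;
  apply/existsP => -[x /existsP [y /existsP [z /and4P []]]]; rewrite /oneline /=.
- rewrite !tentE; have := ltn_ord x; have := ltn_ord y; have := ltn_ord z.
  by do ! case: ifP; lia.
- rewrite !tent_sqE //; have := ltn_ord x; have := ltn_ord y; have := ltn_ord z.
  by do ! case: ifP; lia.
Qed.

Section EndingInZero.

Variables (n : nat) (p : {perm 'I_n.+2}).
Hypotheses (p_av : ~~ has312 (oneline p)) (p2_av : ~~ has312 (oneline (p * p)%g)).
Hypothesis p_last : p ord_max = ord0.

(* [p] will turn out to be the tent whose rising part [a, ..., n+1] has length [j]. *)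
Let a : nat := p ord0.
Let j : nat := n.+2 - a.

Let no312 (x y z : 'I_n.+2) : (x < y)%N -> (y < z)%N ->
  (p y < p z)%N -> (p z < p x)%N -> False.
Proof. exact: has312F p_av. Qed.

Let no312_sq (x y z : 'I_n.+2) : (x < y)%N -> (y < z)%N ->
  (p (p y) < p (p z))%N -> (p (p z) < p (p x))%N -> False.
Proof. by move=> lt_xy lt_yz; rewrite -!permM; apply: has312F p2_av lt_xy lt_yz. Qed.

Let a_pos : (0 < a)%N.
Proof.
rewrite lt0n; apply/eqP => a0.
have /perm_inj : p ord0 = p ord_max by rewrite p_last; apply: val_inj.
by move/(congr1 val).
Qed.

(* [p^2] ends in [a], so by [avoid312_ltn_last] it preserves the positions below [a]. *)
Let sq_ltn_a x : (p (p x) < a)%N = (x < a)%N.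
Proof.
have := avoid312_ltn_last p2_av x; rewrite /oneline !permM p_last.
by rewrite -/a.
Qed.

Let ltn_a_invE (y : 'I_n.+2) : (p y < a)%N = ((p^-1)%g y < a)%N.
Proof. by rewrite -[RHS]sq_ltn_a permKV. Qed.

Let pinv_max_ltn_a : ((p^-1)%g ord_max < a)%N.
Proof. by rewrite -ltn_a_invE p_last a_pos. Qed.

(* The maximum sits at a position below [a] and [p a < a], so a large value
   after position [a] would complete a 312. *)
Let geq_a_ltn (x : 'I_n.+2) : (a <= x)%N -> (p x < a)%N.
Proof.
move=> le_ax; rewrite ltnNge; apply/negP => le_a_px.
have lt_p2_a : (p (p ord0) < a)%N by rewrite sq_ltn_a a_pos.
case: ltngtP le_ax => // [lt_ax _ | eq_ax _]; last first.
  have eq_x : x = p ord0 by apply: val_inj.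
  by move: le_a_px; rewrite eq_x; lia.
have lt_px_max : (p x < n.+1)%N.
  rewrite ltn_neqAle -ltnS ltn_ord andbT; apply/eqP => eq_px.
  have eq_x : x = (p^-1)%g ord_max by apply: (canRL (permK p)); apply: val_inj.
  by have := pinv_max_ltn_a; rewrite -eq_x; lia.
apply: (no312 pinv_max_ltn_a lt_ax); rewrite ?permKV //=; lia.
Qed.

(* Otherwise the positions [0 < p^-1 y < p^-1 x] carry the 312 [a, y, x]. *)
Let big_before_small (x y : 'I_n.+2) : (a <= p x)%N -> (p y < a)%N -> (x < y)%N.
Proof.
move=> le_a_px lt_py_a; rewrite ltnNge; apply/negP => le_yx.
have lt_x_a : (x < a)%N by rewrite ltnNge; apply/negP => /geq_a_ltn; lia.
have lt_yx : (y < x)%N.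
  rewrite ltn_neqAle le_yx andbT; apply: contraTneq lt_py_a => /ord_inj ->.
  by rewrite -leqNgt.
pose z := (p^-1)%g x; pose u := (p^-1)%g y.
have le_a_z : (a <= z)%N by rewrite leqNgt -sq_ltn_a permKV -leqNgt.
have lt_u_a : (u < a)%N by rewrite -ltn_a_invE.
have u_pos : (0 < u)%N.
  rewrite lt0n; apply: contraTneq lt_yx => u0.
  have -> : y = p ord0 by rewrite -[y](permKV p); congr (p _); apply: val_inj.
  by rewrite -leqNgt ltnW.
by apply: (no312 (x := ord0) (y := u) (z := z)); rewrite ?permKV //; lia.
Qed.

Let geq_a_iff (x : 'I_n.+2) : (a <= p x)%N = (x < j)%N.
Proof.
apply: (downclosed_ltnE (P := [pred x | (a <= p x)%N])); first exact/card_perm_geq/ltnW/ltn_ord.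
move=> {}x y lt_yx; rewrite !inE => le_a_px; rewrite leqNgt; apply/negP.
by move/(big_before_small le_a_px); rewrite ltnNge ltnW.
Qed.

Let ltn_a_iff (x : 'I_n.+2) : (p x < a)%N = (j <= x)%N.
Proof. by rewrite ltnNge geq_a_iff -leqNgt. Qed.

Let j_pos : (0 < j)%N.
Proof. by rewrite subn_gt0 ltn_ord. Qed.

Let j_le_a : (j <= a)%N.
Proof. by rewrite -ltn_a_iff geq_a_ltn. Qed.

Let p_decr (x y : 'I_n.+2) : (j <= x)%N -> (x < y)%N -> (p y < p x)%N.
Proof.
move=> le_jx lt_xy; have := ltn_a_iff x; have := ltn_a_iff y.
rewrite le_jx (leq_trans le_jx (ltnW lt_xy)) => lt_py_a lt_px_a.
rewrite ltn_neqAle; apply/andP; split.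
  by apply: contraTneq lt_xy => /ord_inj /perm_inj ->; rewrite ltnn.
rewrite leqNgt; apply/negP => lt_pxy.
exact: (no312 (x := ord0) (leq_trans j_pos le_jx) lt_xy).
Qed.

(* Through the decreasing tail, a descent of [p] below [j] becomes a 312 of
   [p^2] starting at position 0. *)
Let p_incr (x y : 'I_n.+2) : (x < y)%N -> (y < j)%N -> (p x < p y)%N.
Proof.
move=> lt_xy lt_yj.
have le_a_px : (a <= p x)%N by rewrite geq_a_iff (ltn_trans lt_xy lt_yj).
have lt_a_py : (a < p y)%N.
  rewrite ltn_neqAle geq_a_iff lt_yj andbT.
  by apply: contraTneq lt_xy => /ord_inj /perm_inj <-.
case: (posnP x) => [x0 | x_pos].
  by rewrite (_ : x = ord0) //; apply: val_inj.
rewrite ltn_neqAle; apply/andP; split.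
  by apply: contraTneq lt_xy => /ord_inj /perm_inj ->; rewrite ltnn.
rewrite leqNgt; apply/negP => lt_pyx.
have le_j_py : (j <= p y)%N by rewrite (leq_trans j_le_a) // ltnW.
exact: (no312_sq (x := ord0) x_pos lt_xy (p_decr le_j_py lt_pyx) (p_decr j_le_a lt_a_py)).
Qed.

Lemma ending_in_zero_tent : exists2 j, (0 < j) && (j + j <= n.+2) & p = tent n.+1 j.
Proof.
have aj : (a + j = n.+2)%N by rewrite /j subnKC //; apply/ltnW/ltn_ord.
exists j; first by rewrite j_pos /=; have := j_le_a; lia.
pose f i := nat_of_ord (p (inord i)).
have fE (x : 'I_n.+2) : f x = p x by rewrite /f inord_val.
have f_incr i : (0 <= i < 0 + j.-1)%N -> (f i < f i.+1)%N.
  by move=> lt_i; apply: p_incr; rewrite !inordK; lia.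
have f_decr i : (j <= i < j + (n.+1 - j))%N -> (f i.+1 < f i)%N.
  by move=> lt_i; apply: p_decr; rewrite !inordK; lia.
have f0 : f 0 = a by rewrite -[0]/(nat_of_ord (@ord0 n.+1)) fE.
have f_last : f n.+1 = 0 by rewrite -[n.+1]/(nat_of_ord (@ord_max n.+1)) fE p_last.
have f_bound i : (f i < n.+2)%N by apply: ltn_ord.
have lt_jN : (j < n.+2)%N by have := a_pos; lia.
have f_j : (f j < a)%N by rewrite /f ltn_a_iff inordK.
apply/permP => x; apply: val_inj => /=; rewrite tentE -fE.
have := ltn_ord x; have := j_pos; case: (ltnP x j) => [lt_xj | le_jx] j0 lt_xN.
- have := steps_incr (m := 0) (d := x) (fun i lt_i => f_incr i ltac:(lia)).
  have := steps_incr (m := x) (d := j.-1 - x) (fun i lt_i => f_incr i ltac:(lia)).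
  rewrite add0n subnKC; last lia.
  by have := f_bound j.-1; lia.
- have := steps_decr (m := j) (d := x - j) (fun i lt_i => f_decr i ltac:(lia)).
  have := steps_decr (m := x) (d := n.+1 - x) (fun i lt_i => f_decr i ltac:(lia)).
  by rewrite !subnKC //; lia.
Qed.
End EndingInZero.

Lemma ending_in_zero_tentE n (p : {perm 'I_n.+2}) :
  strongly_avoids p p312 && (p ord_max == ord0) =
  [exists j : 'I_(n.+2)./2, p == tent n.+1 j.+1].
Proof.
apply/idP/existsP => [/andP[] | [j /eqP ->]].
  rewrite strongly_avoids312E => /andP[p_av p2_av] /eqP p_last.
  have [j /andP[j_pos le_2j] ->] := ending_in_zero_tent p_av p2_av p_last.
  have lt_j : (j.-1 < (n.+2)./2)%N by rewrite gtn_half_double -addnn; lia.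
  by exists (Ordinal lt_j); rewrite /= prednK.
have := ltn_ord j; rewrite gtn_half_double -addnn; move: (nat_of_ord j) => k lt_k.
rewrite tent_strongly_avoids312 /=; try lia.
by apply/eqP/val_inj; rewrite /= tentE ifN ?subnn // -leqNgt; change (k < n.+1)%N; lia.
Qed.

Lemma Sav312_end1E n : Sav312_end1 n = if n is 0 then 1 else (n.+1)./2.
Proof.
case: n => [|n].
  rewrite /Sav312_end1 -[RHS](card_Sn 1); apply: eq_card => p.
  by rewrite !inE strongly_avoids312_small // [p _]ord1 eqxx.
have tent_inj : injective (fun j : 'I_(n.+2)./2 => tent n.+1 j.+1).
  move=> i j /permP /(_ ord0) /(congr1 (@nat_of_ord _)); rewrite !tentE /= => eq_ij.
  apply: ord_inj; move: eq_ij (ltn_ord i) (ltn_ord j); rewrite !gtn_half_double -!addnn.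
  by move: (nat_of_ord i) (nat_of_ord j) => i' j'; lia.
rewrite /Sav312_end1 -[RHS](card_ord) -[#|'I__|](card_imset _ tent_inj).
apply: eq_card => p; rewrite inE ending_in_zero_tentE.
by apply/existsP/imsetP => [[j /eqP ->] | [j _ ->]]; exists j.
Qed.

Section DirectSum.

Variables k m : nat.

Definition dsum_fun (s : {perm 'I_k}) (t : {perm 'I_m}) (x : 'I_(k + m)) :=
  unsplit (match split x with inl a => inl _ (s a) | inr b => inr _ (t b) end).

Lemma dsum_fun_inj s t : injective (dsum_fun s t).
Proof.
move=> x y /(can_inj unsplitK) eq_xy; rewrite -[x]splitK -[y]splitK; congr unsplit.
by move: eq_xy; case: (split x) => a; case: (split y) => b //= [/perm_inj ->].
Qed.

Definition dsum s t : {perm 'I_(k + m)} := perm (@dsum_fun_inj s t).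

Lemma dsumL s t a : dsum s t (lshift m a) = lshift m (s a).
Proof. by rewrite permE /dsum_fun (unsplitK (inl a)). Qed.

Lemma dsumR s t b : dsum s t (rshift k b) = rshift k (t b).
Proof. by rewrite permE /dsum_fun (unsplitK (inr b)). Qed.

Lemma split_ordP (x : 'I_(k + m)) :
  (exists a, x = lshift m a) \/ (exists b, x = rshift k b).
Proof. by rewrite -(splitK x); case: (split x) => [a|b]; [left; exists a|right; exists b]. Qed.

Lemma dsumM s t s' t' : (dsum s t * dsum s' t')%g = dsum (s * s')%g (t * t')%g.
Proof.
by apply/permP => x; case: (split_ordP x) => -[y ->]; rewrite permM ?dsumL ?dsumR ?permM.
Qed.

Lemma dsum_inj2 s t s' t' : dsum s t = dsum s' t' -> s = s' /\ t = t'.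
Proof.
move=> eq_st; split; apply/permP => x.
  by apply: (@lshift_inj k m); rewrite -(dsumL s t) -(dsumL s' t') eq_st.
by apply: (@rshift_inj k m); rewrite -(dsumR s t) -(dsumR s' t') eq_st.
Qed.

Lemma has312_dsum s t : has312 (oneline (dsum s t)) = has312 (oneline s) || has312 (oneline t).
Proof.
rewrite /oneline; apply/idP/idP.
- case/existsP => x /existsP [y /existsP [z /and4P []]].
  case: (split_ordP x) => -[x' ->]; case: (split_ordP y) => -[y' ->];
  case: (split_ordP z) => -[z' ->]; rewrite ?dsumL ?dsumR /= => lt_xy lt_yz lt_vyz lt_vzx.
  + apply/orP; left; apply/existsP; exists x'; apply/existsP; exists y'.
    by apply/existsP; exists z'; apply/and4P.
  + by have := ltn_ord (s x'); lia.
  + by have := ltn_ord z'; lia.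
  + by have := ltn_ord (s x'); lia.
  + by have := ltn_ord y'; lia.
  + by have := ltn_ord y'; lia.
  + by have := ltn_ord z'; lia.
  + apply/orP; right; apply/existsP; exists x'; apply/existsP; exists y'.
    by apply/existsP; exists z'; apply/and4P; split; lia.
- case/orP => /existsP [x /existsP [y /existsP [z /and4P [lt_xy lt_yz lt_vyz lt_vzx]]]].
  + apply/existsP; exists (lshift m x); apply/existsP; exists (lshift m y).
    by apply/existsP; exists (lshift m z); rewrite !dsumL; apply/and4P.
  + apply/existsP; exists (rshift k x); apply/existsP; exists (rshift k y).
    by apply/existsP; exists (rshift k z); rewrite !dsumR /= !ltn_add2l; apply/and4P.
Qed.

Lemma strongly_avoids312_dsum s t :
  strongly_avoids (dsum s t) p312 = strongly_avoids s p312 && strongly_avoids t p312.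
Proof.
rewrite !strongly_avoids312E dsumM !has312_dsum !negb_or.
by rewrite -!andbA; congr (_ && _); rewrite andbCA.
Qed.

Lemma dsum_of_stable (p : {perm 'I_(k + m)}) :
  (forall x, (p x < k)%N = (x < k)%N) -> exists s t, p = dsum s t.
Proof.
move=> p_stable.
have s_ok (a : 'I_k) : (p (lshift m a) < k)%N by rewrite p_stable /=.
have t_ok (b : 'I_m) : (p (rshift k b) - k < m)%N.
  by have := ltn_ord (p (rshift k b)); have := ltn_ord b; lia.
have s_inj : injective (fun a => Ordinal (s_ok a)).
  by move=> a a' /(congr1 val) /= /ord_inj /perm_inj /lshift_inj.
have t_inj : injective (fun b => Ordinal (t_ok b)).
  move=> b b' /(congr1 val) /= eq_b; apply/rshift_inj/(@perm_inj _ p)/val_inj.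
  move: eq_b (p_stable (rshift k b)) (p_stable (rshift k b')).
  by rewrite /= !ltnNge !leq_addr /=; lia.
exists (perm s_inj), (perm t_inj); apply/permP => x.
case: (split_ordP x) => -[y ->]; rewrite ?dsumL ?dsumR; apply: val_inj; rewrite /= permE //=.
by rewrite subnKC // leqNgt p_stable /= ltnNge leq_addr.
Qed.

End DirectSum.

(* A value left of the 0 exceeding a value right of it would form a 312 with the 0. *)
Lemma avoid312_zero_split k m (p : {perm 'I_(k.+1 + m)}) :
  ~~ has312 (oneline p) -> p (lshift m ord_max) = 0 :> nat ->
  forall x, (p x < k.+1)%N = (x < k.+1)%N.
Proof.
move=> p_av p_zero x.
suff below_k v : ((p^-1)%g v < k.+1)%N = (v < k.+1)%N by rewrite -below_k permK.
set c := lshift m (@ord_max k); have c_zero : p c = 0 :> nat := p_zero.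
apply: (downclosed_ltnE (P := [pred v | ((p^-1)%g v < k.+1)%N])).
  exact/card_perm_ltn/leq_addr.
move=> {}v w lt_wv; rewrite !inE => lt_v; rewrite ltnNge; apply/negP => le_w.
have lt_v_k : ((p^-1)%g v < k)%N.
  rewrite ltn_neqAle -ltnS lt_v andbT; apply: contraTneq lt_wv => eq_v.
  have -> : v = p c by rewrite -[v](permKV p); congr (p _); apply: val_inj.
  by rewrite c_zero.
have w_pos : (0 < w)%N.
  rewrite lt0n; apply: contraTneq le_w => w0.
  have -> : w = p c by apply: ord_inj; rewrite c_zero.
  by rewrite permK /= ltnn.
by apply: (has312F p_av (j := c) lt_v_k le_w); rewrite /oneline /= !permKV ?c_zero.
Qed.

Definition zero_at N (p : {perm 'I_N}) (i : nat) : bool :=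
  [exists x : 'I_N, (x == i :> nat) && (p x == 0 :> nat)].

(* Indexed by naturals so that [N] can be rewritten to [i.+1 + (n - i)]. *)
Definition Sav312_zero_at (N i : nat) : nat :=
  #|[set p : {perm 'I_N} | strongly_avoids p p312 && zero_at p i]|.

Lemma zero_at_lshift k m (p : {perm 'I_(k.+1 + m)}) :
  zero_at p k = (p (lshift m ord_max) == 0 :> nat).
Proof.
apply/existsP/idP => [[x /andP[/eqP eq_x p_x]] | p_zero]; last first.
  by exists (lshift m ord_max); rewrite /= eqxx.
by have <- : x = lshift m ord_max by apply: val_inj.
Qed.

Lemma Sav312_zero_at_dsum k m :
  Sav312_zero_at (k.+1 + m) k = (Sav312_end1 k * Sav312 m)%N.
Proof.
have dsum_inj : injective (fun st : {perm 'I_k.+1} * {perm 'I_m} => dsum st.1 st.2).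
  by move=> [s t] [s' t'] /dsum_inj2 /= [-> ->].
rewrite /Sav312_zero_at /Sav312_end1 /Sav312 -cardsX -(card_imset _ dsum_inj).
apply: eq_card => p; rewrite inE zero_at_lshift; apply/andP/imsetP => [[p_sa p_zero] | [[s t]]].
  have [p_av _] := andP (eqbLR (strongly_avoids312E p) p_sa).
  have [s [t p_st]] := dsum_of_stable (avoid312_zero_split p_av (eqP p_zero)).
  move: p_sa p_zero; rewrite p_st strongly_avoids312_dsum dsumL => /andP[s_sa t_sa] s_zero.
  by exists (s, t); rewrite // !inE s_sa t_sa andbT; apply/eqP/val_inj/eqP.
rewrite !inE /= => /andP[/andP[s_sa /eqP s_zero] t_sa] ->.
by rewrite strongly_avoids312_dsum s_sa t_sa dsumL s_zero.
Qed.

Lemma Sav312S n : Sav312 n.+1 = (\sum_(i < n.+1) Sav312_end1 i * Sav312 (n - i))%N.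
Proof.
have -> : Sav312 n.+1 = (\sum_(i < n.+1) Sav312_zero_at n.+1 i)%N.
  rewrite /Sav312 -sum1dep_card.
  rewrite (partition_big (fun p : {perm 'I_n.+1} => (p^-1)%g ord0) xpredT) //=.
  apply: eq_bigr => i _; rewrite sum1dep_card; apply: eq_card => p; rewrite !inE; congr (_ && _).
  apply/eqP/existsP => [<- | [x /andP[/eqP eq_x /eqP p_x]]].
    by exists ((p^-1)%g ord0); rewrite permKV eqxx.
  have -> : i = x by apply: val_inj.
  by rewrite -(permK p x); congr (_ _); apply: val_inj.
apply: eq_bigr => i _; move: (nat_of_ord i) (ltn_ord i) => {}i lt_i.
by rewrite (_ : n.+1 = i.+1 + (n - i))%N ?Sav312_zero_at_dsum //; lia.
Qed.

Lemma Sav312_small n : (n <= 2)%N -> Sav312 n = n`!.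
Proof.
move=> le_n2; rewrite /Sav312 -card_Sn; apply: eq_card => p.
by rewrite !inE strongly_avoids312_small.
Qed.

Local Open Scope ring_scope.

Lemma Posz_sum I (r : seq I) (P : pred I) (F : I -> nat) :
  Posz (\sum_(i <- r | P i) F i)%N = \sum_(i <- r | P i) Posz (F i).
Proof. exact: (big_morph Posz PoszD (erefl _)). Qed.

Lemma Sav312_end1_Bcoef n : Posz (Sav312_end1 n) = Bcoef n.+1.
Proof. by rewrite Sav312_end1E /Bcoef; case: n. Qed.

Lemma Sav312_oneMinusB n : conv oneMinusB SavGF n = Posz (n == 0%N).
Proof.
rewrite /conv big_ord_recl.
case: n => [|n]; first by rewrite big_ord0 addr0 /oneMinusB /SavGF Sav312_small.
rewrite (eq_bigr (fun i : 'I_n.+1 => - Posz (Sav312_end1 i * Sav312 (n - i)))) => [|i _].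
  by rewrite sumrN -Posz_sum -Sav312S /oneMinusB /SavGF subn0 /Bcoef /= subr0 mul1r subrr.
by rewrite lift0 /oneMinusB subSS sub0r mulNr -Sav312_end1_Bcoef PoszM.
Qed.

Lemma Bcoef_denominator n :
  conv (poly_coefs [:: 1; -1; -1; 1]) Bcoef n = poly_coefs [:: 0; 1; 0; -1; 1] n.
Proof.
case: n => [|[|[|[|m]]]]; rewrite /conv; try by rewrite !big_ord_recl big_ord0.
rewrite 4!big_ord_recl big1 => [|i _]; last by rewrite /poly_coefs nth_default ?mul0r.
rewrite /= /poly_coefs /= /Bcoef /bump /=.
by case: m => [|m] //=; rewrite !uphalfE /= nth_nil; lia.
Qed.

Definition eq_upto (R : nzRingType) n (P Q : {poly R}) := forall k, (k <= n)%N -> P`_k = Q`_k.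

Lemma eq_uptoM (R : nzRingType) n (P P' Q Q' : {poly R}) :
  eq_upto n P P' -> eq_upto n Q Q' -> eq_upto n (P * Q) (P' * Q').
Proof.
move=> PP' QQ' k le_kn; rewrite !coefM; apply: eq_bigr => i _.
by rewrite PP' ?QQ' //; have := ltn_ord i; lia.
Qed.

Lemma conv_coefM (a b : nat -> int) (P Q : {poly int}) n :
  (forall i, (i <= n)%N -> P`_i = a i) -> (forall i, (i <= n)%N -> Q`_i = b i) ->
  conv a b n = (P * Q)`_n.
Proof.
move=> Pa Qb; rewrite coefM /conv; apply: eq_bigr => i _.
by rewrite Pa ?Qb ?leq_subr //; have := ltn_ord i; lia.
Qed.

Lemma Sav312_denominator n :
  conv (poly_coefs [:: -1; 2; 1; -2; 1]) SavGF n = poly_coefs [:: -1; 1; 1; -1] n.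
Proof.
pose S := \poly_(i < n.+1) SavGF i; pose B := \poly_(i < n.+1) Bcoef i.
pose Q : {poly int} := Poly [:: 1; -1; -1; 1].
have S_coef i : (i <= n)%N -> S`_i = SavGF i by move=> le_in; rewrite coef_poly ltnS le_in.
have B_coef i : (i <= n)%N -> B`_i = Bcoef i by move=> le_in; rewrite coef_poly ltnS le_in.
have Poly_coef s i : (Poly s)`_i = poly_coefs s i by rewrite coef_Poly.
have QB : eq_upto n (Q * B) (Poly [:: 0; 1; 0; -1; 1]).
  move=> k le_kn; rewrite Poly_coef -Bcoef_denominator.
  apply: esym; apply: conv_coefM => i le_ik; first exact: Poly_coef.
  exact: B_coef (leq_trans le_ik le_kn).
have BS : eq_upto n ((1 - B) * S) 1.
  move=> k le_kn; rewrite coef1 natz -Sav312_oneMinusB.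
  apply: esym; apply: conv_coefM => i le_ik; last exact: S_coef (leq_trans le_ik le_kn).
  by rewrite coefB coef1 B_coef ?natz // (leq_trans le_ik le_kn).
have A_QB : eq_upto n (Poly [:: -1; 2; 1; -2; 1]) (Q * B - Q).
  move=> k le_kn; rewrite coefB QB // !Poly_coef /poly_coefs.
  by case: k {le_kn} => [|[|[|[|[|k]]]]] //=; rewrite nth_nil subr0.
rewrite (conv_coefM (fun i _ => Poly_coef _ i) S_coef).
rewrite (eq_uptoM A_QB (_ : eq_upto n S S)) // (_ : _ * S = - (Q * ((1 - B) * S))); last by ring.
rewrite coefN (eq_uptoM (_ : eq_upto n Q Q) BS) // mulr1 Poly_coef /poly_coefs.
by case: n {S B S_coef B_coef QB BS A_QB} => [|[|[|[|n]]]] //=; rewrite nth_nil oppr0.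
Qed.

Theorem mainTheorem8 :
  (forall n : nat,
     conv (poly_coefs [:: (-1)%R; 2%R; 1%R; (-2)%R; 1%R]) SavGF n
     = poly_coefs [:: (-1)%R; 1%R; 1%R; (-1)%R] n)
  /\ (forall n : nat, conv oneMinusB SavGF n = Posz (n == 0%N))
  /\ (forall n : nat, Posz (Sav312_end1 n) = Bcoef n.+1)
  /\ (forall n : nat,
        conv (poly_coefs [:: 1%R; (-1)%R; (-1)%R; 1%R]) Bcoef n
        = poly_coefs [:: 0%R; 1%R; 0%R; (-1)%R; 1%R] n).
Proof.
split; first exact: Sav312_denominator.
split; first exact: Sav312_oneMinusB.
split; first exact: Sav312_end1_Bcoef.
exact: Bcoef_denominator.
Qed.
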